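(* Let $H$ and $G$ be real Hilbert spaces and let $Z$ be a nonempty closed convex subset of $H\times G$. Let $x_0\in H\times G$, let $\{\lambda_n\}_{n\in\mathbb{N}}\subset(0,1]$, and let $\{H_n\}_{n\in\mathbb{N}}$ be closed convex subsets of $H\times G$ with $Z\subset H_n$ for all $n$. Consider any sequence generated as follows: for $n=0,1,\dots$, $$x_{n+1/2}=x_n+\lambda_n\big(P_{H_n}(x_n)-x_n\big),$$ choose a closed convex set $C_n$ with $Z\subset C_n\subset H(x_n,x_{n+1/2})$, and set $$x_{n+1}=P_{H(x_0,x_n)\cap C_n}(x_0).$$ Then: 1. $Z\subset H(x_0,x_n)\cap C_n$ for all $n\in\mathbb{N}$; 2. $\|x_{n+1}-x_0\|\ge\|x_n-x_0\|$ for all $n\in\mathbb{N}$; 3. $\sum_{n=0}^{\infty}\|x_{n+1}-x_n\|^2<+\infty$; 4. $\sum_{n=0}^{\infty}\|x_{n+1/2}-x_n\|^2<+\infty$; 5. if for every $x\in H\times G$ and every subsequence $\{x_{k_n}\}$ with $x_{k_n}\rightharpoonup x$ (weakly) one has $x\in Z$, then $x_n\to P_Z(x_0)$ strongly.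
   Context: $H\times G$ carries the product Hilbert structure. For $x,y\in H\times G$, $H(x,y):=\{h\in H\times G:\ \langle h-y\mid x-y\rangle\le 0\}$ (so $H(x,x)$ is the whole space). $P_D$ denotes the metric projection onto a nonempty closed convex set $D$. *)

From mathcomp Require Import all_boot all_order all_algebra.
From mathcomp Require Import all_classical all_reals all_analysis.
Set Implicit Arguments. Unset Strict Implicit. Unset Printing Implicit Defensive.
Import Order.TTheory GRing.Theory Num.Theory.
Import numFieldNormedType.Exports.
Local Open Scope classical_set_scope.
Local Open Scope ring_scope.

Definition is_inner_product (R : realType) (V : lmodType R) (ip : V -> V -> R) :=
  [/\ (forall x y, ip x y = ip y x),
      (forall (a : R) x y z, ip (a *: x + y) z = a * ip x z + ip y z),
      (forall x, 0 <= ip x x) &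
      (forall x, ip x x = 0 -> x = 0)].

Definition ipnorm (R : realType) (V : lmodType R) (ip : V -> V -> R) (x : V) : R :=
  Num.sqrt (ip x x).

Definition strong_cvg (R : realType) (V : lmodType R) (ip : V -> V -> R)
  (u : nat -> V) (l : V) : Prop :=
  (fun n => ipnorm ip (u n - l)) @ \oo --> (0 : R).

Definition weak_cvg (R : realType) (V : lmodType R) (ip : V -> V -> R)
  (u : nat -> V) (l : V) : Prop :=
  forall y : V, (fun n => ip (u n) y) @ \oo --> ip l y.

Definition ip_cauchy (R : realType) (V : lmodType R) (ip : V -> V -> R)
  (u : nat -> V) : Prop :=
  forall e : R, 0 < e -> exists N : nat, forall m n : nat, (N <= m)%N -> (N <= n)%N ->
    ipnorm ip (u m - u n) < e.

Definition is_hilbert (R : realType) (V : lmodType R) (ip : V -> V -> R) : Prop :=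
  is_inner_product ip /\
  forall u : nat -> V, ip_cauchy ip u -> exists l : V, strong_cvg ip u l.

Definition prod_ip (R : realType) (H G : lmodType R)
  (ipH : H -> H -> R) (ipG : G -> G -> R) (x y : (H * G)%type) : R :=
  ipH x.1 y.1 + ipG x.2 y.2.

(* closed (for the norm topology, equivalently sequentially closed) *)
Definition ip_closed (R : realType) (V : lmodType R) (ip : V -> V -> R)
  (D : set V) : Prop :=
  forall (u : nat -> V) (l : V), (forall n, D (u n)) -> strong_cvg ip u l -> D l.

Definition halfsp (R : realType) (V : lmodType R) (ip : V -> V -> R)
  (x y : V) : set V :=
  [set h | ip (h - y) (x - y) <= 0].

Definition is_proj (R : realType) (V : lmodType R) (ip : V -> V -> R)
  (D : set V) (x p : V) : Prop :=
  D p /\ forall z, D z -> ipnorm ip (x - p) <= ipnorm ip (x - z).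

(* metric projection P_D x (the nearest point of D to x, which exists and is
   unique when D is nonempty closed convex in a Hilbert space; defaults to x
   if no nearest point exists) *)
Definition metric_proj (R : realType) (V : lmodType R) (ip : V -> V -> R)
  (D : set V) (x : V) : V :=
  xget x (is_proj ip D x).

(* Z stays inside every D_n := H(x0, x_n) ∩ C_n: if Z ⊆ D_n, then x_{n+1} = P_{D_n} x0
   and the variational inequality of the projection says D_n ⊆ H(x0, x_{n+1}).  Since
   x_{n+1} ∈ H(x0, x_n), Pythagoras in that half-space gives
   ‖x_{n+1} - x_n‖² + ‖x_n - x0‖² ≤ ‖x_{n+1} - x0‖², while minimality gives
   ‖x_n - x0‖ ≤ ‖z - x0‖ for z ∈ Z; so ‖x_n - x0‖ increases and the squared steps have
   bounded partial sums.  As x_{n+1} ∈ C_n ⊆ H(x_n, x_{n+1/2}), the half steps are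
   shorter than the steps.  Finally, with p = P_Z x0, ‖x_n - p‖² ≤ 2⟨x_n - y, x0 - p⟩
   for every y ∈ Z; if x_n did not converge to p, a subsequence staying away from p
   would have a weakly convergent subsequence (bounded sequences of a Hilbert space
   are weakly sequentially compact: diagonal extraction, then Riesz representation of
   the limit functional), whose limit y lies in Z by hypothesis, a contradiction. *)

From mathcomp Require Import all_boot all_order all_algebra.
From mathcomp Require Import all_classical all_reals all_analysis.
From mathcomp Require Import ring lra.
Import Order.TTheory GRing.Theory Num.Theory.
Import numFieldNormedType.Exports.
Local Open Scope classical_set_scope.
Local Open Scope ring_scope.

Section real_sequences.
Context {R : realType}.
Implicit Types (a : nat -> R) (f : nat -> nat).

Lemma cvgn_ltP a l : a @ \oo --> l <->
  forall e, 0 < e -> exists N, forall n, (N <= n)%N -> `|a n - l| < e.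
Proof.
split=> [/cvgrPdist_lt H e e0|H].
  by have [N _ HN] := H e e0; exists N => n Nn; rewrite distrC; apply: HN.
apply/cvgrPdist_lt => e e0; have [N HN] := H e e0.
by exists N => // n /= Nn; rewrite distrC; apply: HN.
Qed.

Lemma cvgn_cauchyP a : cvgn a <->
  forall e, 0 < e -> exists N, forall m n, (N <= m)%N -> (N <= n)%N -> `|a m - a n| < e.
Proof.
split=> [/cvg_ex[l /cvgn_ltP al] e e0|H].
  have [N HN] := al (e / 2) (divr_gt0 e0 (ltr0n _ 2)).
  exists N => m n /HN am /HN an.
  rewrite (_ : a m - a n = (a m - l) - (a n - l)); last by ring.
  by apply: (le_lt_trans (ler_normB _ _)); lra.
apply: cauchy_cvg; apply: cauchy_exP => e e0.
have [N HN] := H e e0; exists (a N); exists N => // n /= Nn.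
exact: HN.
Qed.

Lemma cvgn_le a l c : a @ \oo --> l -> (forall n, a n <= c) -> l <= c.
Proof.
move=> /cvgn_ltP al ac; apply/ler_addgt0Pr => e /al[N /(_ N (leqnn N))].
by have := ac N; rewrite distrC ltr_distl => ? /andP[]; lra.
Qed.

Lemma incr_homo_ltn {f} : (forall n, (f n < f n.+1)%N) -> {homo f : m n / (m < n)%N}.
Proof. exact: homo_ltn ltn_trans. Qed.

Lemma incr_geq_id {f} : (forall n, (f n < f n.+1)%N) -> forall n, (n <= f n)%N.
Proof. by move=> fi; elim=> // n IH; exact: leq_ltn_trans IH (fi n). Qed.

Lemma bolzano_weierstrass_incr a M : (forall n, `|a n| <= M) ->
  exists2 f, (forall n, (f n < f n.+1)%N) & cvgn (a \o f).
Proof.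
move=> aM; have [|f /increasing_seqP fi af] := @bolzano_weierstrass R a.
  by exists M; split; [exact: num_real | move=> r Mr n _; exact: le_trans (aM n) (ltW Mr)].
by exists f.
Qed.

Lemma not_cvgn_subseq a l : ~ a @ \oo --> l ->
  exists2 e, 0 < e & exists2 k, (forall n, (k n < k n.+1)%N) & forall n, e <= `|a (k n) - l|.
Proof.
move=> /cvgn_ltP /existsNP[e /not_implyP[e0 /forallNP far]]; exists e => //.
have /choice[g gP] N : exists n, (N <= n)%N /\ e <= `|a n - l|.
  have /existsNP[n /not_implyP[Nn /negP]] := far N.
  by rewrite -leNgt => ?; exists n.
pose k := fix k n := if n is n'.+1 then g (k n').+1 else g 0%N.
by exists k => [n|[|n]]; [exact: (gP _).1 | exact: (gP _).2 | exact: (gP _).2].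
Qed.

(* [diag_extract sel b m] extracts successively along [sel (b 0)], ..., so that each
   [b k], [k <= m], converges along it; from index [m] on, the diagonal [n |-> s n n]
   is a subsequence of [s m]. *)
Fixpoint diag_extract (sel : (nat -> R) -> nat -> nat) (b : nat -> nat -> R) m :=
  if m is m'.+1 then diag_extract sel b m' \o sel (b m \o diag_extract sel b m')
  else sel (b 0%N).

Lemma diagonal_extraction (b : nat -> nat -> R) M : (forall m n, `|b m n| <= M) ->
  exists2 d, (forall n, (d n < d n.+1)%N) & forall m, cvgn (b m \o d).
Proof.
move=> bM.
have /choice[sel selP] : forall a, exists f, (forall n, `|a n| <= M) ->
    (forall n, (f n < f n.+1)%N) /\ cvgn (a \o f).
  move=> a; have [/bolzano_weierstrass_incr[f fi af]|aNM] := pselect (forall n, `|a n| <= M).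
    by exists f.
  by exists id => /aNM.
pose s := diag_extract sel b.
have sS m : s m.+1 = s m \o sel (b m.+1 \o s m) by [].
have sel_incr m (g : nat -> nat) n : (sel (b m \o g) n < sel (b m \o g) n.+1)%N.
  exact: (selP (b m \o g) (fun k => bM m (g k))).1 n.
have s_incr m n : (s m n < s m n.+1)%N.
  elim: m n => [|m IH] n; first exact: (selP (b 0%N) (bM 0%N)).1 n.
  by rewrite sS; apply: incr_homo_ltn IH _ _ _; apply: sel_incr.
have s_cvg m : cvgn (b m \o s m).
  case: m => [|m]; first exact: (selP (b 0%N) (bM 0%N)).2.
  by rewrite sS; exact: (selP (b m.+1 \o s m) (fun k => bM _ (s m k))).2.
have s_tail m k n : exists2 j, (n <= j)%N & s (k + m)%N n = s m j.
  elim: k n => [|k IH] n; first by exists n.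
  rewrite addSn sS /=; have [j nj ->] := IH (sel (b (k + m).+1 \o s (k + m)%N) n).
  by exists j; first exact: leq_trans (incr_geq_id (sel_incr _ _) n) nj.
exists (fun n => s n n).
  move=> n /=; apply: incr_homo_ltn (s_incr n) _ _ _.
  exact: incr_geq_id (sel_incr _ _) _.
move=> m; apply/cvg_ex; have /cvg_ex[l /cvgn_ltP bl] := s_cvg m.
exists l; apply/cvgn_ltP => e /bl[N HN]; exists (maxn N m) => n.
rewrite geq_max => /andP[Nn mn] /=.
have [j nj ->] : exists2 j, (n <= j)%N & s n n = s m j.
  by have := s_tail m (n - m)%N n; rewrite subnK.
exact/HN/(leq_trans Nn).
Qed.

Lemma nneseries_bounded_lt_pinfty a B : (forall n, 0 <= a n) ->
  (forall N, \sum_(0 <= i < N) a i <= B) -> (\sum_(0 <= n <oo) (a n)%:E < +oo)%E.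
Proof.
move=> a0 aB; apply: (@le_lt_trans _ _ B%:E); last exact: ltry.
apply: lime_le; first by apply: is_cvg_nneseries => n _ _; rewrite lee_fin.
by apply: nearW => N; rewrite sumEFin lee_fin.
Qed.

End real_sequences.

Section convexity.
Context {R : realType} {V : lmodType R}.

Lemma convex_setP (A : set V) : convex_set A <->
  forall a b t, A a -> A b -> 0 <= t <= 1 -> A (t *: a + (1 - t) *: b).
Proof.
split=> [cA a b t Aa Ab /andP[t0 t1]|cA a b l].
  by have := cA a b (Itv01 t0 t1); rewrite !inE => /(_ Aa Ab).
by rewrite !inE => Aa Ab; apply: cA => //; rewrite ge0 le1.
Qed.

Lemma convex_setI (A B : set V) : convex_set A -> convex_set B -> convex_set (A `&` B).
Proof.
move=> /convex_setP cA /convex_setP cB; apply/convex_setP => a b t [Aa Ba] [Ab Bb] t01.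
by split; [exact: cA | exact: cB].
Qed.

Definition is_subspace (S : set V) := S 0 /\ forall a u v, S u -> S v -> S (a *: u + v).

Lemma is_subspace_convex S : is_subspace S -> convex_set S.
Proof.
move=> [S0 SS]; apply/convex_setP => a b t Sa Sb _.
by apply: (SS) => //; rewrite -(addr0 ((1 - t) *: b)); exact: SS.
Qed.

End convexity.

Section inner_product.
Context {R : realType} {V : lmodType R} (ip : V -> V -> R).
Hypothesis hip : is_inner_product ip.
Local Notation nsq x := (ip x x).

Lemma ipC x y : ip x y = ip y x.
Proof. by case: hip. Qed.

Lemma ipDZl a x y z : ip (a *: x + y) z = a * ip x z + ip y z.
Proof. by case: hip. Qed.

Lemma ip_ge0 x : 0 <= nsq x.
Proof. by case: hip. Qed.

Lemma ip_eq0 x : nsq x = 0 -> x = 0.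
Proof. by case: hip => _ _ _; apply. Qed.

Lemma ip0l z : ip 0 z = 0.
Proof. by have := ipDZl 1 0 0 z; rewrite scale1r addr0 mul1r; lra. Qed.

Lemma ipDl x y z : ip (x + y) z = ip x z + ip y z.
Proof. by rewrite -{1}(scale1r x) ipDZl mul1r. Qed.

Lemma ipZl a x z : ip (a *: x) z = a * ip x z.
Proof. by rewrite -(addr0 (a *: x)) ipDZl ip0l addr0. Qed.

Lemma ipNl x z : ip (- x) z = - ip x z.
Proof. by rewrite -scaleN1r ipZl mulN1r. Qed.

Lemma ipBl x y z : ip (x - y) z = ip x z - ip y z.
Proof. by rewrite ipDl ipNl. Qed.

Lemma ip0r z : ip z 0 = 0.
Proof. by rewrite ipC ip0l. Qed.

Lemma ipDr x y z : ip z (x + y) = ip z x + ip z y.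
Proof. by rewrite ipC ipDl !(ipC z). Qed.

Lemma ipZr a x z : ip z (a *: x) = a * ip z x.
Proof. by rewrite ipC ipZl ipC. Qed.

Lemma ipNr x z : ip z (- x) = - ip z x.
Proof. by rewrite ipC ipNl ipC. Qed.

Lemma ipBr x y z : ip z (x - y) = ip z x - ip z y.
Proof. by rewrite ipDr ipNr. Qed.

Lemma nsqD x y : nsq (x + y) = nsq x + 2 * ip x y + nsq y.
Proof. by rewrite ipDl !ipDr (ipC y x); lra. Qed.

Lemma nsqB x y : nsq (x - y) = nsq x - 2 * ip x y + nsq y.
Proof. by rewrite ipBl !ipBr (ipC y x); lra. Qed.

Lemma nsqZ a x : nsq (a *: x) = a ^+ 2 * nsq x.
Proof. by rewrite ipZl ipZr mulrA expr2. Qed.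

Lemma nsqC x y : nsq (x - y) = nsq (y - x).
Proof. by rewrite -opprB ipNl ipNr opprK. Qed.

Lemma parallelogram x y : nsq (x + y) + nsq (x - y) = 2 * nsq x + 2 * nsq y.
Proof. by rewrite nsqD nsqB; lra. Qed.

Lemma ipnorm_ge0 x : 0 <= ipnorm ip x.
Proof. exact: sqrtr_ge0. Qed.

Lemma ipnorm_sqr x : ipnorm ip x ^+ 2 = nsq x.
Proof. by rewrite sqr_sqrtr // ip_ge0. Qed.

Lemma ipnormC x y : ipnorm ip (x - y) = ipnorm ip (y - x).
Proof. by rewrite /ipnorm nsqC. Qed.

Lemma ipnorm_le x y : (ipnorm ip x <= ipnorm ip y) = (nsq x <= nsq y).
Proof. by rewrite ler_sqrt // ip_ge0. Qed.

Lemma ip_sqr_le x y : ip x y ^+ 2 <= nsq x * nsq y.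
Proof.
have [y0|yn0] := eqVneq (nsq y) 0; first by rewrite y0 (ip_eq0 _ y0) ip0r expr0n mulr0.
have yp : 0 < nsq y by rewrite lt_neqAle eq_sym yn0 ip_ge0.
have := ip_ge0 (x - (ip x y / nsq y) *: y).
rewrite nsqB nsqZ ipZr; set c := nsq y; set b := ip x y; set a := nsq x.
have -> : a - 2 * (b / c * b) + (b / c) ^+ 2 * c = a - b ^+ 2 / c.
  by field; rewrite gt_eqF.
by rewrite subr_ge0 ler_pdivrMr // mulrC.
Qed.

Lemma normr_ip_le x y : `|ip x y| <= ipnorm ip x * ipnorm ip y.
Proof.
rewrite -sqrtr_sqr /ipnorm -sqrtrM ?ip_ge0 // ler_sqrt ?ip_sqr_le //.
by rewrite mulr_ge0 // ip_ge0.
Qed.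

Lemma ipnormD_le x y : ipnorm ip (x + y) <= ipnorm ip x + ipnorm ip y.
Proof.
rewrite -(ler_pXn2r (isT : (0 < 2)%N)) ?nnegrE ?addr_ge0 ?ipnorm_ge0 //.
rewrite ipnorm_sqr nsqD sqrrD !ipnorm_sqr mulr2n.
by have := le_trans (ler_norm _) (normr_ip_le x y); lra.
Qed.

Lemma strong_cvgP u l : strong_cvg ip u l <->
  forall e, 0 < e -> exists N, forall n, (N <= n)%N -> ipnorm ip (u n - l) < e.
Proof.
rewrite /strong_cvg cvgn_ltP.
by split=> H e /H[N HN]; exists N => n /HN; rewrite subr0 ger0_norm ?ipnorm_ge0.
Qed.

Lemma strong_weak_cvg u l : strong_cvg ip u l -> weak_cvg ip u l.
Proof.
move=> /strong_cvgP ul y; apply/cvgn_ltP => e e0.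
have y1 : 0 < ipnorm ip y + 1 by have := ipnorm_ge0 y; lra.
have [N HN] := ul (e / (ipnorm ip y + 1)) (divr_gt0 e0 y1).
exists N => n /HN unl; rewrite -ipBl (le_lt_trans (normr_ip_le _ _)) //.
rewrite -(ltr_pM2r y1) divfK ?gt_eqF // in unl.
by have := ipnorm_ge0 (u n - l); nra.
Qed.


Lemma ip_closedI (A B : set V) :
  ip_closed ip A -> ip_closed ip B -> ip_closed ip (A `&` B).
Proof.
move=> cA cB u l ABu ul; split; first by apply: (cA u) => // n; case: (ABu n).
by apply: (cB u) => // n; case: (ABu n).
Qed.

Lemma is_proj_ip_le D x p : convex_set D -> is_proj ip D x p ->
  forall z, D z -> ip (x - p) (z - p) <= 0.
Proof.
move=> /convex_setP cD [Dp pmin] z Dz; rewrite leNgt; apply/negP => c0.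
set c := ip (x - p) (z - p) in c0; set d := nsq (z - p).
have d0 : 0 <= d := ip_ge0 _.
have cd : 0 < c + d by lra.
pose t := c / (c + d).
have t0 : 0 < t by rewrite divr_gt0.
have t1 : t <= 1 by rewrite ler_pdivrMr // mul1r; lra.
(* minimality at [p + t (z - p)] gives [2 c <= t d], but [t d <= c] *)
have := pmin _ (cD z p t Dz Dp _); rewrite ltW ?t0 ?t1 // ipnorm_le.
have -> : x - (t *: z + (1 - t) *: p) = (x - p) - t *: (z - p).
  by rewrite scalerBl scale1r scalerBr addrCA opprD addrA.
rewrite [X in _ <= X]nsqB nsqZ ipZr -/c -/d.
have td : t * d <= c by rewrite /t mulrAC ler_pdivrMr //; nra.
by rewrite expr2; nra.
Qed.

Lemma halfsp_nsq a b h : halfsp ip a b h -> nsq (h - b) + nsq (b - a) <= nsq (h - a).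
Proof.
rewrite /halfsp /= => hab.
have -> : h - a = (h - b) - (a - b) by rewrite opprB addrA subrK.
by rewrite [X in _ <= X]nsqB (nsqC b); lra.
Qed.

Lemma nsq_sub_proj_le w y p x : nsq (w - x) <= nsq (p - x) -> ip (x - p) (y - p) <= 0 ->
  nsq (w - p) <= 2 * ip (w - y) (x - p).
Proof.
move=> wx xpy.
have e1 : nsq (w - p) = nsq (w - x) + 2 * ip (w - x) (x - p) + nsq (x - p).
  by rewrite -nsqD subrKA.
have e2 : ip (w - y) (x - p) = ip (w - x) (x - p) + nsq (x - p) - ip (y - p) (x - p).
  by rewrite -ipDl -ipBl subrKA opprB subrKA.
have e3 : nsq (p - x) = nsq (x - p) := nsqC _ _.
have e4 : ip (x - p) (y - p) = ip (y - p) (x - p) := ipC _ _.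
lra.
Qed.

Lemma halfsp_convex a b : convex_set (halfsp ip a b).
Proof.
apply/convex_setP => u w t hu hw /andP[t0 t1]; rewrite /halfsp /= in hu hw *.
have -> : t *: u + (1 - t) *: w - b = t *: (u - b) + (1 - t) *: (w - b).
  by rewrite !scalerBr addrACA -opprD -scalerDl subrKC scale1r.
rewrite ipDl !ipZl.
have : t * ip (u - b) (a - b) <= 0 by rewrite mulr_ge0_le0.
have : (1 - t) * ip (w - b) (a - b) <= 0 by rewrite mulr_ge0_le0 // subr_ge0.
lra.
Qed.

Lemma halfsp_closed a b : ip_closed ip (halfsp ip a b).
Proof.
move=> u l hu /strong_weak_cvg /(_ (a - b)) ul; rewrite /halfsp /= ipBl.
apply: (@cvgn_le _ (fun n => ip (u n) (a - b) - ip b (a - b))).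
  exact: cvgB ul (cvg_cst _).
by move=> n; rewrite -ipBl; exact: hu.
Qed.

Lemma apollonius x y z :
  nsq (y - z) + 4 * nsq (x - 2^-1 *: (y + z)) = 2 * nsq (x - y) + 2 * nsq (x - z).
Proof.
have -> : x - 2^-1 *: (y + z) = 2^-1 *: ((x - y) + (x - z)).
  rewrite addrACA -opprD scalerBr -mulr2n -[x *+ 2]scaler_nat scalerA.
  by rewrite mulVf ?pnatr_eq0 // scale1r.
rewrite nsqZ -parallelogram.
have -> : (x - y) - (x - z) = z - y by rewrite opprB addrC subrKA.
rewrite (nsqC y).
rewrite mulrA (_ : 4 * 2^-1 ^+ 2 = 1 :> R); last by field.
by rewrite mul1r addrC.
Qed.

Lemma minimizing_seq_cauchy D x r zs : convex_set D -> 0 <= r ->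
  (forall z, D z -> r <= ipnorm ip (x - z)) -> (forall n, D (zs n)) ->
  (forall n, ipnorm ip (x - zs n) < r + n.+1%:R^-1) -> ip_cauchy ip zs.
Proof.
move=> /convex_setP cD r0 r_le Dzs zs_lt e e0.
have k0 : 0 < e ^+ 2 / (8 * r + 4) by rewrite divr_gt0 ?exprn_gt0 //; lra.
have [N _ HN] := near_infty_natSinv_lt (PosNum k0).
exists N => m n /HN /= am /HN /= an.
set a := m.+1%:R^-1 in am; set b := n.+1%:R^-1 in an.
have [a0 a1] : 0 <= a /\ a <= 1 by rewrite invr_ge0 ler0n invf_le1 ?ler1n ?ltr0n.
have [b0 b1] : 0 <= b /\ b <= 1 by rewrite invr_ge0 ler0n invf_le1 ?ler1n ?ltr0n.
have mid : r ^+ 2 <= nsq (x - 2^-1 *: (zs m + zs n)).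
  rewrite -ipnorm_sqr ler_pXn2r ?nnegrE ?ipnorm_ge0 //; apply: r_le.
  have -> : 2^-1 *: (zs m + zs n) = 2^-1 *: zs m + (1 - 2^-1) *: zs n.
    by rewrite scalerDr (_ : 1 - 2^-1 = 2^-1 :> R) //; field.
  by apply: cD => //; lra.
have sq_lt y c : 0 <= c -> ipnorm ip y < c -> nsq y < c ^+ 2.
  by move=> c0 yc; rewrite -ipnorm_sqr ltr_pXn2r ?nnegrE ?ipnorm_ge0.
have hm := sq_lt _ _ (addr_ge0 r0 a0) (zs_lt m).
have hn := sq_lt _ _ (addr_ge0 r0 b0) (zs_lt n).
(* with the midpoint in D: ‖z_m - z_n‖² < 2(r+a)² + 2(r+b)² - 4r² <= (8r+4)k = e² *)
have := apollonius x (zs m) (zs n).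
rewrite -(ltr_pXn2r (isT : (0 < 2)%N)) ?nnegrE ?ipnorm_ge0 ?ltW // ipnorm_sqr.
have ke : (8 * r + 4) * (e ^+ 2 / (8 * r + 4)) = e ^+ 2 by field; lra.
set k := e ^+ 2 / (8 * r + 4) in am an ke.
have ra : r * a <= r * k by rewrite ler_wpM2l // ltW.
have rb : r * b <= r * k by rewrite ler_wpM2l // ltW.
have aa : a * a <= a by rewrite ler_piMr.
have bb : b * b <= b by rewrite ler_piMr.
rewrite !expr2 in hm hn mid ke *.
nra.
Qed.

Hypothesis hcomp : forall u, ip_cauchy ip u -> exists l, strong_cvg ip u l.

Lemma is_proj_exists D x : D !=set0 -> ip_closed ip D -> convex_set D ->
  exists p, is_proj ip D x p.
Proof.
move=> [z0 Dz0] clD cD.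
pose S := [set ipnorm ip (x - z) | z in D].
have Slb : has_lbound S by exists 0 => _ [z _ <-]; exact: ipnorm_ge0.
have S0 : S !=set0 by exists (ipnorm ip (x - z0)); exists z0.
set r := inf S.
have r_le z : D z -> r <= ipnorm ip (x - z) by move=> Dz; apply: ge_inf => //; exists z.
have r0 : 0 <= r by apply: lb_le_inf => // _ [z _ <-]; exact: ipnorm_ge0.
have /choice[zs zsP] n : exists z, D z /\ ipnorm ip (x - z) < r + n.+1%:R^-1.
  have np : 0 < n.+1%:R^-1 :> R by rewrite invr_gt0 ltr0n.
  by have [_ [z Dz <-] ?] := inf_adherent np (conj S0 Slb); exists z.
have [p zs_p] : exists p, strong_cvg ip zs p.
  by apply/hcomp/(minimizing_seq_cauchy _ _ _ _ cD r0 r_le) => n; case: (zsP n).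
exists p; split; first by apply: (clD zs) => // n; case: (zsP n).
move=> z Dz; apply: le_trans (r_le z Dz); apply/ler_addgt0Pr => e e0.
have e2 : 0 < e / 2 by rewrite divr_gt0.
have [N1 HN1] := (strong_cvgP zs p).1 zs_p (e / 2) e2.
have [N2 _ HN2] := near_infty_natSinv_lt (PosNum e2).
pose n := maxn N1 N2; have [_ xzn] := zsP n.
have n2 : n.+1%:R^-1 < e / 2 :> R := HN2 n (leq_maxr _ _).
have := ipnormD_le (x - zs n) (zs n - p); rewrite addrA subrK => /le_trans; apply.
apply: le_trans (lerD (ltW xzn) (ltW (HN1 n (leq_maxl _ _)))) _.
by move: n2; set a := n.+1%:R^-1; lra.
Qed.

Lemma is_proj_metric_proj D x : D !=set0 -> ip_closed ip D -> convex_set D ->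
  is_proj ip D x (metric_proj ip D x).
Proof. by move=> D0 clD cD; apply: xgetPex; exact: is_proj_exists. Qed.

Lemma metric_proj_ip_le D x : D !=set0 -> ip_closed ip D -> convex_set D ->
  forall z, D z -> ip (x - metric_proj ip D x) (z - metric_proj ip D x) <= 0.
Proof. by move=> D0 clD cD; apply: is_proj_ip_le => //; exact: is_proj_metric_proj. Qed.

Lemma metric_proj_orthogonal S y : is_subspace S -> ip_closed ip S ->
  S (metric_proj ip S y) /\ forall w, S w -> ip (y - metric_proj ip S y) w = 0.
Proof.
move=> sS clS; have S0 : S !=set0 by exists 0; case: sS.
have cS := is_subspace_convex _ sS.
have [SP _] := is_proj_metric_proj S y S0 clS cS.
have VI := metric_proj_ip_le S y S0 clS cS.
split=> // w Sw; set P := metric_proj ip S y in SP VI *.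
have := VI _ (sS.2 1 w P Sw SP); have := VI _ (sS.2 (-1) w P Sw SP).
by rewrite !addrK scale1r scaleN1r ipNr; lra.
Qed.

Section bounded_linear_functional.
Variables (f : V -> R) (K : R).
Hypothesis flin : forall a y z, f (a *: y + z) = a * f y + f z.
Hypothesis fK : forall y, `|f y| <= K * ipnorm ip y.

Lemma bounded_linear_cvg u l : strong_cvg ip u l -> (fun n => f (u n)) @ \oo --> f l.
Proof.
move=> /strong_cvgP ul; apply/cvgn_ltP => e e0.
have K1 : 0 < `|K| + 1 by have := normr_ge0 K; lra.
have [N HN] := ul (e / (`|K| + 1)) (divr_gt0 e0 K1).
exists N => n /HN unl.
have -> : f (u n) - f l = f (u n - l).
  by have := flin 1 (u n - l) l; rewrite scale1r subrK mul1r; lra.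
apply: le_lt_trans (fK _) _; rewrite -(ltr_pM2r K1) divfK ?gt_eqF // in unl.
have := ipnorm_ge0 (u n - l); have := ler_norm K; nra.
Qed.

Lemma riesz_representation : exists w, forall y, f y = ip w y.
Proof.
have f0 : f 0 = 0 by have := flin 1 0 0; rewrite scale1r addr0 mul1r; lra.
have [f_eq0|/existsNP[y0 /eqP fy0]] := pselect (forall y, f y = 0).
  by exists 0 => y; rewrite f_eq0 ip0l.
pose Ker := [set y | f y = 0].
have sK : is_subspace Ker.
  by split=> // a y z; rewrite /Ker /= flin => -> ->; rewrite mulr0 addr0.
have clK : ip_closed ip Ker.
  move=> ys y Kys /bounded_linear_cvg fy.
  have ys0 : (fun n => f (ys n)) = fun=> 0 by apply/funext => n; exact: Kys.
  by rewrite ys0 in fy; exact: cvg_unique fy (cvg_cst 0).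
have [Kq orth] := metric_proj_orthogonal Ker y0 sK clK.
set z := y0 - metric_proj ip Ker y0 in orth.
have fz : f z = f y0 by rewrite /z addrC -scaleN1r flin Kq mulr0 add0r.
have nz : nsq z != 0.
  by apply: contra_neq fy0 => /ip_eq0 z0; rewrite -fz z0.
have fz0 : f z != 0 by rewrite fz.
exists ((f z / nsq z) *: z) => y.
have Ky : Ker ((- (f y / f z)) *: z + y) by rewrite /Ker /= flin; field.
have := orth _ Ky; rewrite ipDr ipZr => zy.
rewrite ipZl (_ : ip z y = f y / f z * nsq z); last by lra.
by field; apply/andP.
Qed.

End bounded_linear_functional.

Lemma cvgn_ip_subspace v : is_subspace [set y | cvgn (fun n => ip (v n) y)].
Proof.
split=> [|a y z Sy Sz] /=; first by under eq_fun do rewrite ip0r; exact: is_cvg_cst.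
under eq_fun do rewrite ipDr ipZr.
exact: is_cvgD (is_cvgM (is_cvg_cst _) Sy) Sz.
Qed.

Section bounded_sequence.
Variables (v : nat -> V) (K : R).
Hypothesis vK : forall n, ipnorm ip (v n) <= K.

Let ip_v_le n y : `|ip (v n) y| <= K * ipnorm ip y.
Proof. by apply: le_trans (normr_ip_le _ _) _; rewrite ler_wpM2r ?ipnorm_ge0. Qed.

Lemma cvgn_ip_closed : ip_closed ip [set y | cvgn (fun n => ip (v n) y)].
Proof.
have K0 : 0 <= K := le_trans (ipnorm_ge0 _) (vK 0%N).
move=> ys y Sys /strong_cvgP ys_y; apply/cvgn_cauchyP => e e0.
have e3K : 0 < e / (3 * (K + 1)) by rewrite divr_gt0 ?mulr_gt0 //; lra.
have [N /(_ N (leqnn N)) yN] := ys_y _ e3K.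
have [M HM] := (cvgn_cauchyP _).1 (Sys N) (e / 3) (divr_gt0 e0 (ltr0Sn _ 2)).
exists M => m n Mm Mn; have := HM m n Mm Mn.
have -> : ip (v m) y - ip (v n) y =
    (ip (v m) (ys N) - ip (v n) (ys N)) + ip (v m) (y - ys N) - ip (v n) (y - ys N).
  by rewrite !ipBr; ring.
have Ky : K * ipnorm ip (y - ys N) <= e / 3.
  rewrite ipnormC; apply: le_trans (_ : K * (e / (3 * (K + 1))) <= _).
    by rewrite ler_wpM2l // ltW.
  by rewrite mulrA ler_pdivrMr ?mulr_gt0 //; nra.
have := ip_v_le m (y - ys N); have := ip_v_le n (y - ys N).
set c := ip (v m) (ys N) - ip (v n) (ys N).
have := ler_normB (c + ip (v m) (y - ys N)) (ip (v n) (y - ys N)).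
have := ler_normD c (ip (v m) (y - ys N)).
lra.
Qed.

Lemma cvgn_ip_everywhere : (forall k, cvgn (fun n => ip (v n) (v k))) ->
  forall y, cvgn (fun n => ip (v n) y).
Proof.
(* y and its projection P onto the closed subspace S ∋ v k have the same inner
   products with every v n, since y - P ⊥ S. *)
move=> vv y; set S := [set y | cvgn (fun n => ip (v n) y)].
have [SP orth] := metric_proj_orthogonal S y (cvgn_ip_subspace v) cvgn_ip_closed.
set P := metric_proj ip S y in SP orth.
suff -> : (fun n => ip (v n) y) = fun n => ip (v n) P by exact: SP.
apply/funext => n; rewrite -[in LHS](subrK P y) ipDr.
by rewrite ipC orth ?add0r //; exact: vv.
Qed.

Lemma weak_cvg_of_cvgn_ip : (forall y, cvgn (fun n => ip (v n) y)) ->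
  exists w, weak_cvg ip v w.
Proof.
move=> vy; pose f y := limn (fun n => ip (v n) y).
have flin a y z : f (a *: y + z) = a * f y + f z.
  apply: cvg_lim => //; under eq_fun do rewrite ipDr ipZr.
  exact: cvgD (cvgM (cvg_cst _) (vy y)) (vy z).
have fK y : `|f y| <= K * ipnorm ip y.
  by apply: cvgn_le (cvg_norm (vy y)) _ => n; exact: ip_v_le.
have [w fw] := riesz_representation _ _ flin fK.
by exists w => y; rewrite -fw; exact: vy.
Qed.

End bounded_sequence.

Lemma weak_cvg_subseq u K : (forall n, ipnorm ip (u n) <= K) ->
  exists2 f, (forall n, (f n < f n.+1)%N) & exists w, weak_cvg ip (fun n => u (f n)) w.
Proof.
move=> uK; have K0 : 0 <= K := le_trans (ipnorm_ge0 _) (uK 0%N).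
have uuK m n : `|ip (u n) (u m)| <= K * K.
  by apply: le_trans (normr_ip_le _ _) _; apply: ler_pM; rewrite ?ipnorm_ge0.
have [d d_incr d_cvg] := diagonal_extraction _ _ uuK.
exists d => //; apply: (@weak_cvg_of_cvgn_ip _ K) => [n|]; first exact: uK.
by apply: (@cvgn_ip_everywhere _ K) => [n|k]; [exact: uK | exact: d_cvg].
Qed.

End inner_product.

Section product_space.
Context {R : realType} {H G : lmodType R} (ipH : H -> H -> R) (ipG : G -> G -> R).
Hypotheses (hH : is_inner_product ipH) (hG : is_inner_product ipG).
Local Notation ip := (prod_ip ipH ipG).

Lemma prod_ip_inner_product : is_inner_product ip.
Proof.
split=> [x y|a x y z|x|[a b]]; rewrite /prod_ip /=.
- by rewrite (ipC _ hH) (ipC _ hG).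
- by rewrite (ipDZl _ hH) (ipDZl _ hG) mulrDr addrACA.
- by rewrite addr_ge0 // ip_ge0.
- move=> ab0; have ha := ip_ge0 _ hH a; have hb := ip_ge0 _ hG b.
  have a0 : ipH a a = 0 by lra.
  have b0 : ipG b b = 0 by lra.
  by rewrite (ip_eq0 _ hH _ a0) (ip_eq0 _ hG _ b0).
Qed.

Lemma ipnorm_fst_le x : ipnorm ipH x.1 <= ipnorm ip x.
Proof.
rewrite /ipnorm /prod_ip ler_sqrt; last by rewrite addr_ge0 ?ip_ge0.
by rewrite lerDl ip_ge0.
Qed.

Lemma ipnorm_snd_le x : ipnorm ipG x.2 <= ipnorm ip x.
Proof.
rewrite /ipnorm /prod_ip ler_sqrt; last by rewrite addr_ge0 ?ip_ge0.
by rewrite lerDr ip_ge0.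
Qed.

Lemma ipnorm_prod_le x : ipnorm ip x <= ipnorm ipH x.1 + ipnorm ipG x.2.
Proof.
rewrite -(ler_pXn2r (isT : (0 < 2)%N)) ?nnegrE ?addr_ge0 ?ipnorm_ge0 //.
rewrite sqrrD (ipnorm_sqr _ prod_ip_inner_product) (ipnorm_sqr _ hH) (ipnorm_sqr _ hG).
have := mulr_ge0 (ipnorm_ge0 ipH x.1) (ipnorm_ge0 ipG x.2).
by rewrite /prod_ip mulr2n; lra.
Qed.

Lemma prod_ip_complete : (forall u, ip_cauchy ipH u -> exists l, strong_cvg ipH u l) ->
  (forall u, ip_cauchy ipG u -> exists l, strong_cvg ipG u l) ->
  forall u, ip_cauchy ip u -> exists l, strong_cvg ip u l.
Proof.
move=> cH cG u uC.
have [l1 /strong_cvgP ul1] : exists l, strong_cvg ipH (fun n => (u n).1) l.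
  apply: cH => e /uC[N HN]; exists N => m n Nm Nn.
  exact: le_lt_trans (ipnorm_fst_le (u m - u n)) (HN m n Nm Nn).
have [l2 /strong_cvgP ul2] : exists l, strong_cvg ipG (fun n => (u n).2) l.
  apply: cG => e /uC[N HN]; exists N => m n Nm Nn.
  exact: le_lt_trans (ipnorm_snd_le (u m - u n)) (HN m n Nm Nn).
exists (l1, l2); apply/strong_cvgP => e e0.
have e2 : 0 < e / 2 by rewrite divr_gt0.
have [N1 HN1] := ul1 _ e2; have [N2 HN2] := ul2 _ e2.
exists (maxn N1 N2) => n; rewrite geq_max => /andP[/HN1 n1 /HN2 n2].
apply: le_lt_trans (ipnorm_prod_le _) _; rewrite /=; lra.
Qed.

End product_space.

Lemma prod_ip_hilbert {R : realType} {H G : lmodType R}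
    {ipH : H -> H -> R} {ipG : G -> G -> R} :
  is_hilbert ipH -> is_hilbert ipG -> is_hilbert (prod_ip ipH ipG).
Proof.
move=> [hH cH] [hG cG]; split; first exact: prod_ip_inner_product.
exact: prod_ip_complete.
Qed.

Section hybrid_projection.
Context {R : realType} {V : lmodType R} {ip : V -> V -> R}.
Hypothesis hV : is_hilbert ip.
Context {Z : set V} {x xh : nat -> V} {C : nat -> set V}.
Hypotheses (Z_ne : Z !=set0) (Z_cl : ip_closed ip Z) (Z_cv : convex_set Z).
Hypotheses (C_cl : forall n, ip_closed ip (C n)) (C_cv : forall n, convex_set (C n)).
Hypotheses (Z_C : forall n, Z `<=` C n) (C_H : forall n, C n `<=` halfsp ip (x n) (xh n)).
Hypothesis def_x : forall n,
  x n.+1 = metric_proj ip (halfsp ip (x 0%N) (x n) `&` C n) (x 0%N).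

Local Notation nsq y := (ip y y).
Local Notation x0 := (x 0%N).
Local Notation D n := (halfsp ip x0 (x n) `&` C n).
Let hip : is_inner_product ip := hV.1.
Let hcomp : forall u, ip_cauchy ip u -> exists l, strong_cvg ip u l := hV.2.

Let D_closed n : ip_closed ip (D n).
Proof. by apply: ip_closedI; [exact: halfsp_closed | exact: C_cl]. Qed.

Let D_convex n : convex_set (D n).
Proof. by apply: convex_setI; [exact: halfsp_convex | exact: C_cv]. Qed.

Lemma hybrid_Z_subset n : Z `<=` D n.
Proof.
elim: n => [|n IH] z Zz; split; try exact: Z_C.
  by rewrite /halfsp /= subrr (ip0r _ hip).
have D0 : D n !=set0 by case: Z_ne => w /IH; exists w.
have := metric_proj_ip_le _ hip hcomp _ x0 D0 (D_closed n) (D_convex n) _ (IH _ Zz).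
by rewrite -def_x (ipC _ hip).
Qed.

Lemma hybrid_is_proj n : is_proj ip (D n) x0 (x n.+1).
Proof.
have D0 : D n !=set0 by case: Z_ne => w /hybrid_Z_subset; exists w.
by rewrite def_x; exact: is_proj_metric_proj.
Qed.

Lemma hybrid_step n : nsq (x n.+1 - x n) + nsq (x n - x0) <= nsq (x n.+1 - x0).
Proof. by have [[/(halfsp_nsq _ hip) + _] _] := hybrid_is_proj n; apply. Qed.

Lemma hybrid_half_step n : nsq (xh n - x n) <= nsq (x n.+1 - x n).
Proof.
have [[_ /C_H /(halfsp_nsq _ hip)]] := hybrid_is_proj n.
by have := ip_ge0 _ hip (x n.+1 - xh n); lra.
Qed.

Lemma hybrid_dist_le z : Z z -> forall n, nsq (x n - x0) <= nsq (z - x0).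
Proof.
move=> Zz [|n]; first by rewrite subrr (ip0l _ hip) (ip_ge0 _ hip).
have [_ /(_ z (hybrid_Z_subset n _ Zz))] := hybrid_is_proj n.
by rewrite (ipnorm_le _ hip) (nsqC _ hip x0) (nsqC _ hip x0 z).
Qed.

Lemma hybrid_sum_le N : \sum_(0 <= i < N) nsq (x i.+1 - x i) <= nsq (x N - x0).
Proof.
elim: N => [|N IH]; first by rewrite big_geq // (ip_ge0 _ hip).
by rewrite big_nat_recr //=; have := hybrid_step N; lra.
Qed.

Lemma hybrid_dist_nondecreasing n : ipnorm ip (x n - x0) <= ipnorm ip (x n.+1 - x0).
Proof.
rewrite (ipnorm_le _ hip).
by have := hybrid_step n; have := ip_ge0 _ hip (x n.+1 - x n); lra.
Qed.

Lemma hybrid_step_series_finite :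
  (\sum_(0 <= n <oo) ((ipnorm ip (x n.+1 - x n)) ^+ 2)%:E < +oo)%E.
Proof.
have [z Zz] := Z_ne.
apply: (nneseries_bounded_lt_pinfty _ (nsq (z - x0))) => [n|N].
  by rewrite exprn_ge0 ?ipnorm_ge0.
under eq_bigr do rewrite (ipnorm_sqr _ hip).
exact: le_trans (hybrid_sum_le N) (hybrid_dist_le _ Zz N).
Qed.

Lemma hybrid_half_step_series_finite :
  (\sum_(0 <= n <oo) ((ipnorm ip (xh n - x n)) ^+ 2)%:E < +oo)%E.
Proof.
have [z Zz] := Z_ne.
apply: (nneseries_bounded_lt_pinfty _ (nsq (z - x0))) => [n|N].
  by rewrite exprn_ge0 ?ipnorm_ge0.
apply: le_trans _ (le_trans (hybrid_sum_le N) (hybrid_dist_le _ Zz N)).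
by apply: ler_sum => n _; rewrite (ipnorm_sqr _ hip); exact: hybrid_half_step.
Qed.

Lemma hybrid_strong_cvg :
  (forall y k, (forall n, (k n < k n.+1)%N) -> weak_cvg ip (fun n => x (k n)) y -> Z y) ->
  strong_cvg ip x (metric_proj ip Z x0).
Proof.
move=> weak_cluster; set p := metric_proj ip Z x0.
have [Zp _] := is_proj_metric_proj _ hip hcomp Z x0 Z_ne Z_cl Z_cv.
have p_ip_le := metric_proj_ip_le _ hip hcomp Z x0 Z_ne Z_cl Z_cv.
apply: contrapT => /not_cvgn_subseq[e e0 [k k_incr far]].
have xkK n : ipnorm ip (x (k n)) <= ipnorm ip (p - x0) + ipnorm ip x0.
  have := ipnormD_le _ hip (x (k n) - x0) x0; rewrite subrK => /le_trans; apply.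
  by rewrite lerD2r (ipnorm_le _ hip) hybrid_dist_le.
have [g g_incr [y xy]] := weak_cvg_subseq _ hip hcomp _ _ xkK.
have Zy : Z y.
  apply: (weak_cluster y (k \o g)) => // n.
  exact: incr_homo_ltn k_incr _ _ (g_incr n).
have e2 : 0 < e ^+ 2 / 2 by rewrite divr_gt0 ?exprn_gt0.
have [N /(_ N (leqnn N))] := (cvgn_ltP _ _).1 (xy (x0 - p)) _ e2.
set w := x (k (g N)); rewrite ltr_norml => /andP[_ close].
have := far (g N); rewrite subr0 ger0_norm ?ipnorm_ge0 // -/w => ew.
have := nsq_sub_proj_le _ hip _ _ _ _ (hybrid_dist_le _ Zp (k (g N))) (p_ip_le _ Zy).
rewrite -/w -(ipnorm_sqr _ hip) (ipBl _ hip).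
have : e ^+ 2 <= ipnorm ip (w - p) ^+ 2 by rewrite !expr2; nra.
lra.
Qed.

Lemma hybrid_projection_props :
  [/\ (forall n, Z `<=` halfsp ip x0 (x n) `&` C n),
      (forall n, ipnorm ip (x n.+1 - x0) >= ipnorm ip (x n - x0)),
      (\sum_(0 <= n <oo) ((ipnorm ip (x n.+1 - x n)) ^+ 2)%:E < +oo)%E,
      (\sum_(0 <= n <oo) ((ipnorm ip (xh n - x n)) ^+ 2)%:E < +oo)%E &
      ((forall y k, (forall n, (k n < k n.+1)%N) ->
          weak_cvg ip (fun n => x (k n)) y -> Z y) ->
       strong_cvg ip x (metric_proj ip Z x0))].
Proof.
split; [exact: hybrid_Z_subset | exact: hybrid_dist_nondecreasing |
  exact: hybrid_step_series_finite | exact: hybrid_half_step_series_finite |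
  exact: hybrid_strong_cvg].
Qed.

End hybrid_projection.

Theorem proposition3 (R : realType) (H G : lmodType R)
  (ipH : H -> H -> R) (ipG : G -> G -> R)
  (hH : is_hilbert ipH) (hG : is_hilbert ipG)
  (Z : set (H * G)%type)
  (Z_ne : Z !=set0) (Z_cl : ip_closed (prod_ip ipH ipG) Z) (Z_cv : convex_set Z)
  (lam : nat -> R) (lam_rng : forall n, 0 < lam n <= 1)
  (Hn : nat -> set (H * G)%type)
  (Hn_cl : forall n, ip_closed (prod_ip ipH ipG) (Hn n))
  (Hn_cv : forall n, convex_set (Hn n))
  (Z_Hn : forall n, Z `<=` Hn n)
  (x xh : nat -> (H * G)%type) (C : nat -> set (H * G)%type)
  (def_xh : forall n,
     xh n = x n + lam n *: (metric_proj (prod_ip ipH ipG) (Hn n) (x n) - x n))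
  (C_cl : forall n, ip_closed (prod_ip ipH ipG) (C n))
  (C_cv : forall n, convex_set (C n))
  (Z_C : forall n, Z `<=` C n)
  (C_H : forall n, C n `<=` halfsp (prod_ip ipH ipG) (x n) (xh n))
  (def_x : forall n,
     x n.+1 = metric_proj (prod_ip ipH ipG)
                (halfsp (prod_ip ipH ipG) (x 0%N) (x n) `&` C n) (x 0%N)) :
  [/\ (forall n, Z `<=` halfsp (prod_ip ipH ipG) (x 0%N) (x n) `&` C n),
      (forall n, ipnorm (prod_ip ipH ipG) (x n.+1 - x 0%N)
                 >= ipnorm (prod_ip ipH ipG) (x n - x 0%N)),
      (\sum_(0 <= n <oo) ((ipnorm (prod_ip ipH ipG) (x n.+1 - x n)) ^+ 2)%:E
         < +oo)%E,
      (\sum_(0 <= n <oo) ((ipnorm (prod_ip ipH ipG) (xh n - x n)) ^+ 2)%:E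
         < +oo)%E &
      ((forall (y : (H * G)%type) (k : nat -> nat),
          (forall n, (k n < k n.+1)%N) ->
          weak_cvg (prod_ip ipH ipG) (fun n => x (k n)) y -> Z y) ->
       strong_cvg (prod_ip ipH ipG) x (metric_proj (prod_ip ipH ipG) Z (x 0%N)))].
Proof.
exact (hybrid_projection_props (prod_ip_hilbert hH hG)
  Z_ne Z_cl Z_cv C_cl C_cv Z_C C_H def_x).
Qed.
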